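(* Let $K$ be a finite simplicial complex, let $\sigma_i^{(q)}$ be a $q$-simplex and $\sigma_j^{(q')}$ a $q'$-simplex of $K$, and suppose that $\sigma_i^{(q)}\sim_{L_{p^*}}\sigma_j^{(q')}$ for some integer $p\ge 0$. Put $p'=q+q'-p$. If $\sigma_i^{(q)}\not\sim_{U_{p'}}\sigma_j^{(q')}$, then $\sigma_i^{(q)}\not\sim_{U_{p'+h}}\sigma_j^{(q')}$ for every integer $h\geq 1$.
   Context: $K$ is a finite abstract simplicial complex: a finite collection of nonempty finite vertex sets (simplices) closed under taking nonempty subsets. A $q$-simplex $\sigma^{(q)}$ has $q+1$ vertices; a face of a simplex is a simplex of $K$ contained in it as a set (a simplex is a face of itself). $p$-lower adjacency: $\sigma^{(q)}\sim_{L_p}\sigma^{(q')}$ iff there is a $p$-simplex $\tau^{(p)}$ of $K$ with $\tau^{(p)}\subseteq\sigma^{(q)}$ and $\tau^{(p)}\subseteq\sigma^{(q')}$. Strict $p$-lower adjacency: $\sigma^{(q)}\sim_{L_{p^*}}\sigma^{(q')}$ iff $\sigma^{(q)}\sim_{L_p}\sigma^{(q')}$ and $\sigma^{(q)}\not\sim_{L_{p+1}}\sigma^{(q')}$. $p$-upper adjacency: $\sigma^{(q)}\sim_{U_p}\sigma^{(q')}$ iff there is a $p$-simplex $\tau^{(p)}$ of $K$ with $\sigma^{(q)}\subseteq\tau^{(p)}$ and $\sigma^{(q')}\subseteq\tau^{(p)}$. *)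

From mathcomp Require Import all_boot.
Set Implicit Arguments. Unset Strict Implicit. Unset Printing Implicit Defensive.

Definition simplicial_complex (T : finType) (K : {set {set T}}) : Prop :=
  (forall s, s \in K -> s != set0) /\
  (forall s t : {set T}, s \in K -> t \subset s -> t != set0 -> t \in K).

Definition is_simplex (T : finType) (K : {set {set T}}) (q : nat) (s : {set T}) : Prop :=
  s \in K /\ #|s| = q.+1.

Definition lower_adj (T : finType) (K : {set {set T}}) (p : nat) (s s' : {set T}) : Prop :=
  exists tau, is_simplex K p tau /\ tau \subset s /\ tau \subset s'.

Definition strict_lower_adj (T : finType) (K : {set {set T}}) (p : nat) (s s' : {set T}) : Prop :=
  lower_adj K p s s' /\ ~ lower_adj K p.+1 s s'.

Definition upper_adj (T : finType) (K : {set {set T}}) (p : nat) (s s' : {set T}) : Prop :=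
  exists tau, is_simplex K p tau /\ s \subset tau /\ s' \subset tau.

From mathcomp Require Import all_boot.
From mathcomp Require Import zify.

(* Since faces of simplices are simplices, two simplices are p-lower adjacent
   exactly when they share at least p+1 vertices; strict p-lower adjacency thus
   pins the intersection down to p+1 vertices, and the union then has
   q + q' - p + 1 vertices.  Any simplex containing both contains their union,
   which is therefore itself a simplex, of dimension exactly q + q' - p. *)

Lemma subset_of_card (T : finType) (A : {set T}) (k : nat) :
  k <= #|A| -> exists2 B : {set T}, B \subset A & #|B| = k.
Proof.
case/card_geqP=> r [r_uniq <- r_sub]; exists [set:: r].
  by apply/subsetP=> x; rewrite inE => /r_sub.
by rewrite cardsE (card_uniqP r_uniq).
Qed.

Section Adjacency.

Context {T : finType} {K : {set {set T}}}.
Hypothesis K_complex : simplicial_complex K.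

Lemma simplex_neq0 {u : {set T}} : u \in K -> u != set0.
Proof. by case: K_complex => K_neq0 _; apply: K_neq0. Qed.

Lemma face_in_complex {u t : {set T}} :
  u \in K -> t \subset u -> t != set0 -> t \in K.
Proof. by case: K_complex => _; apply. Qed.

Context {s s' : {set T}}.
Hypothesis sK : s \in K.

Lemma lower_adj_card {p : nat} : lower_adj K p s s' -> p.+1 <= #|s :&: s'|.
Proof.
case=> tau [[_ <-] [tau_s tau_s']].
by apply: subset_leq_card; rewrite subsetI tau_s tau_s'.
Qed.

Lemma card_lower_adj {p : nat} : p.+1 <= #|s :&: s'| -> lower_adj K p s s'.
Proof.
case/subset_of_card=> tau tau_ss' card_tau.
move: (tau_ss'); rewrite subsetI => /andP [tau_s tau_s'].
exists tau; split=> //; split=> //.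
by apply: face_in_complex sK tau_s _; rewrite -card_gt0 card_tau.
Qed.

Lemma strict_lower_adj_card {p : nat} :
  strict_lower_adj K p s s' -> #|s :&: s'| = p.+1.
Proof.
move=> [/lower_adj_card card_ge not_lower_adj].
apply/eqP; rewrite eqn_leq card_ge andbT leqNgt.
by apply/negP=> /card_lower_adj.
Qed.

Lemma upper_adj_setU {p : nat} :
  upper_adj K p s s' -> upper_adj K #|s :|: s'|.-1 s s'.
Proof.
move=> [tau [[tauK _] [s_tau s'_tau]]].
have ss'_neq0 : s :|: s' != set0.
  have /set0Pn [x xs] := simplex_neq0 sK.
  by apply/set0Pn; exists x; rewrite inE xs.
exists (s :|: s'); split; last by rewrite subsetUl subsetUr.
split; last by rewrite prednK // card_gt0.
by apply: face_in_complex tauK _ ss'_neq0; rewrite subUset s_tau s'_tau.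
Qed.

End Adjacency.

Theorem mainTheorem1 (T : finType) (K : {set {set T}}) (q q' p : nat)
    (s s' : {set T}) :
  simplicial_complex K ->
  is_simplex K q s -> is_simplex K q' s' ->
  strict_lower_adj K p s s' ->
  ~ upper_adj K (q + q' - p) s s' ->
  forall h : nat, 1 <= h -> ~ upper_adj K (q + q' - p + h) s s'.
Proof.
move=> K_complex [sK card_s] [_ card_s'] strict_adj not_upper_adj h _ upper_adj_h.
have card_I := strict_lower_adj_card K_complex sK strict_adj.
(* rules out truncation in [q + q' - p] *)
have card_I_le_s : #|s :&: s'| <= #|s| by apply/subset_leq_card/subsetIl.
have card_U : #|s :|: s'|.-1 = q + q' - p.
  by move: (cardsUI s s'); rewrite card_s card_s' card_I; lia.
by apply: not_upper_adj; rewrite -card_U; apply: upper_adj_setU upper_adj_h.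
Qed.
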